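(* Let $(f,L)$ satisfy the usual conditions and let $\Omega^\star=\{\liminf_{t\to\infty}Z(t)>0\}$. If $S>0$, then $\mathbb P$-almost surely on $\Omega^\star$, \[\liminf_{t\to\infty}\frac{\log|\hat N(t)|}{\int_0^t\big(r-\frac12f'(s)^2-\frac{\pi^2}{8L(s)^2}+\frac{L'(s)}{2L(s)}\big)ds}\ge1.\]
   Context: Branching Brownian motion (BBM) with branching rate $r>0$: under $\mathbb P$ we start with a single particle at $0$; each particle moves as a standard one-dimensional Brownian motion independently of all others, lives for an independent exponential time with parameter $r$, and then is replaced by two children at its current position, which evolve independently in the same way. $N(t)$ is the set of particles alive at time $t$; for $u\in N(t)$ and $s\le t$, $X_u(s)$ denotes the position at time $s$ of $u$ or of its ancestor alive at time $s$. Given continuous $f:[0,\infty)\to\mathbb R$ and $L:[0,\infty)\to(0,\infty)$, let $\hat N(t)=\{u\in N(t): |X_u(s)-f(s)|<L(s)\ \forall s\le t\}$. When $f,L$ are twice continuously differentiable, set $E(t)=|f'(t)|L(t)+\int_0^t|f''(s)|L(s)ds+\frac12|L'(t)|L(t)+\frac12\int_0^t|L''(s)|L(s)ds$ and $S=\liminf_{t\to\infty}\frac1t\int_0^t\big(r-\frac12 f'(s)^2-\frac{\pi^2}{8L(s)^2}+\frac{L'(s)}{2L(s)}\big)ds$. The pair $(f,L)$ satisfies the usual conditions if (I) $f(0)=0$; (II) $f$ and $L$ are twice continuously differentiable; (III) $E(t)/t\to0$; (IV) $S\in(-\infty,\infty)$. For $u\in N(t)$ define $G_u(t)=\exp\Big(\int_0^t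 f'(s)dX_u(s)-\frac12\int_0^t f'(s)^2ds+\int_0^t\frac{\pi^2}{8L(s)^2}ds+\frac{L'(t)}{2L(t)}(X_u(t)-f(t))^2-\int_0^t\big(\frac{L''(s)}{2L(s)}(X_u(s)-f(s))^2+\frac{L'(s)}{2L(s)}\big)ds\Big)$, $\zeta_u(t)=G_u(t)\cos\big(\frac{\pi}{2L(t)}(X_u(t)-f(t))\big)\mathbf 1_{\{|X_u(s)-f(s)|<L(s)\ \forall s\le t\}}$, and $Z(t)=\sum_{u\in N(t)}e^{-rt}\zeta_u(t)$. *)

From HB Require Import structures.
From mathcomp Require Import all_boot all_order all_algebra finmap.
From mathcomp Require Import all_classical all_reals all_analysis.
Set Implicit Arguments. Unset Strict Implicit. Unset Printing Implicit Defensive.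
Import Order.TTheory GRing.Theory Num.Theory.
Import numFieldNormedType.Exports.
Local Open Scope classical_set_scope.
Local Open Scope ring_scope.

Section Defs.
Context {R : realType}.

Definition liminf_oo (g : R -> \bar R) : \bar R :=
  ereal_sup [set ereal_inf [set g t | t in `[T, +oo[%classic] | T in [set: R]].

Definition int0 (t : R) (h : R -> R) : R :=
  Rintegral lebesgue_measure `[0, t]%classic h.

Definition C2 (f : R -> R) : Prop :=
  (forall x, derivable f x 1) /\ (forall x, derivable (derive1 f) x 1) /\
  continuous (derive1n 2 f).

Definition lnE (x : \bar R) : \bar R :=
  match x with
  | r%:E => if (r <= 0)%R then -oo else (ln r)%:E
  | +oo => +oo
  | -oo => -oo
  end%E.

Definition Efl (f L : R -> R) (t : R) : R :=
  `|derive1 f t| * L t + int0 t (fun s => `|derive1n 2 f s| * L s)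
  + 2^-1 * `|derive1 L t| * L t + 2^-1 * int0 t (fun s => `|derive1n 2 L s| * L s).

Definition integrand (r : R) (f L : R -> R) (s : R) : R :=
  r - 2^-1 * (derive1 f s) ^+ 2 - pi ^+ 2 / (8 * L s ^+ 2) + derive1 L s / (2 * L s).

Definition Iint (r : R) (f L : R -> R) (t : R) : R := int0 t (integrand r f L).

Definition Sfl (r : R) (f L : R -> R) : \bar R :=
  liminf_oo (fun t => (Iint r f L t / t)%:E).

Definition usual_conditions (r : R) (f L : R -> R) : Prop :=
  [/\ f 0 = 0, C2 f /\ C2 L,
      (fun t => Efl f L t / t) @ +oo --> 0
    & Sfl r f L \is a fin_num].

Definition sigmaRV {d} {T : measurableType d} (I : Type) (D : set I)
  (X : I -> T -> R) : set (set T) :=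
  <<s \bigcup_(i in D) preimage_set_system [set: T] (X i) measurable >>.

Definition mutually_independent {d} {T : measurableType d}
  (P : probability T R) (K : choiceType) (F : K -> set (set T)) : Prop :=
  forall (J : {fset K}) (A : K -> set T),
    (forall k, k \in J -> F k (A k)) ->
    P (\bigcap_(k in [set` J]) A k) = (\prod_(k <- J) P (A k))%E.

Definition is_exponential {d} {T : measurableType d} (P : probability T R)
  (r : R) (X : T -> R) : Prop :=
  measurable_fun [set: T] X /\
  forall A : set R, measurable A -> P (X @^-1` A) = exponential_prob r A.

Definition is_brownian {d} {T : measurableType d} (P : probability T R)
  (B : T -> R -> R) : Prop :=
  [/\ forall w, B w 0 = 0,
      forall w, {within `[0, +oo[%classic, continuous (B w)},
      forall t, 0 <= t -> measurable_fun [set: T] (fun w => B w t),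
      forall s t, 0 <= s < t -> forall A : set R, measurable A ->
        P [set w | A (B w t - B w s)] = normal_prob 0 (Num.sqrt (t - s)) A
    & (* independent increments: B t - B s is independent of (B v, v <= s) *)
      forall s t, 0 <= s < t ->
        mutually_independent P (fun b : bool =>
          if b then sigmaRV [set: unit] (fun _ w => B w t - B w s)
          else sigmaRV `[0, s]%classic (fun v w => B w v))].

(* Particles are labelled by u : seq bool; the root is [::] and the two
   children of u are true :: u and false :: u.  tau u is the lifetime of
   particle u and B u its driving Brownian motion (started afresh at 0). *)
Definition label := seq bool.

Section BBM.
Context {T : Type} (tau : label -> T -> R) (B : label -> T -> R -> R).

Fixpoint birth (w : T) (u : label) : R :=
  match u with
  | [::] => 0
  | _ :: v => birth w v + tau v w
  end.

(* X_u(s): position at time s of u, or of its ancestor alive at time s *)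
Fixpoint pos (w : T) (u : label) (s : R) : R :=
  match u with
  | [::] => B [::] w s
  | _ :: v => let b := birth w u in
      if s < b then pos w v s else pos w v b + B u w (s - b)
  end.

Definition alive (t : R) (w : T) : set label :=
  [set u | birth w u <= t < birth w u + tau u w].

Definition in_tube (f L : R -> R) (t : R) (w : T) (u : label) : Prop :=
  forall s, 0 <= s <= t -> `|pos w u s - f s| < L s.

Definition Nhat (f L : R -> R) (t : R) (w : T) : set label :=
  [set u | alive t w u /\ in_tube f L t w u].

Definition card_Nhat (f L : R -> R) (t : R) (w : T) : \bar R :=
  \esum_(u in Nhat f L t w) 1%E.

(* Ito integral \int_0^t f'(s) dX_u(s) for the deterministic C^1 integrand
   f', i.e. the (pathwise) Riemann-Stieltjes integral, written via
   integration by parts *)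
Definition stoch_int (f : R -> R) (t : R) (w : T) (u : label) : R :=
  derive1 f t * pos w u t - derive1 f 0 * pos w u 0
  - int0 t (fun s => pos w u s * derive1n 2 f s).

Definition Gu (f L : R -> R) (t : R) (w : T) (u : label) : R :=
  let Y s := pos w u s - f s in
  expR (stoch_int f t w u - 2^-1 * int0 t (fun s => (derive1 f s) ^+ 2)
        + int0 t (fun s => pi ^+ 2 / (8 * L s ^+ 2))
        + derive1 L t / (2 * L t) * Y t ^+ 2
        - int0 t (fun s => derive1n 2 L s / (2 * L s) * Y s ^+ 2 + derive1 L s / (2 * L s))).

Definition zeta (f L : R -> R) (t : R) (w : T) (u : label) : R :=
  Gu f L t w u * cos (pi / (2 * L t) * (pos w u t - f t))
  * (\1_[set v | in_tube f L t w v] u).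

Definition Zmart (r : R) (f L : R -> R) (t : R) (w : T) : \bar R :=
  \esum_(u in alive t w) (expR (- r * t) * zeta f L t w u)%:E.

End BBM.
End Defs.

From HB Require Import structures.
From mathcomp Require Import all_boot all_order all_algebra finmap.
From mathcomp Require Import all_classical all_reals all_analysis.
From mathcomp Require Import ring lra.
Import Order.TTheory GRing.Theory Num.Theory.
Import numFieldNormedType.Exports.
Local Open Scope classical_set_scope.
Local Open Scope ring_scope.

(* The bound holds on every sample path whose Brownian pieces
   are continuous.  For a particle that stays in the tube |X_u - f| < L up to
   time t, integrating the pathwise Ito term of G_u(t) by parts splits off
   \int_0^t f'^2, and every remaining term is bounded, via |X_u - f| < L, by
   a piece of E(t) or by |f'(0)| L(0).  As the cosine is at most 1,
   Z(t) <= |Nhat(t)| exp(- I(t) + E(t) + |f'(0)| L(0)), with I(t) the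
   denominator in the theorem.  If Z(t) >= c > 0 eventually, taking logarithms
   gives log |Nhat(t)| >= I(t) - E(t) - O(1); finally E(t) = o(t), while
   I(t) >= s t for some s > 0 because S > 0. *)

Section int0_calculus.
Context {R : realType} {t : R}.

Lemma int0_integrable {g : R -> R} : {in `[0, t]%classic, continuous g} ->
  lebesgue_measure.-integrable `[0, t] (EFin \o g).
Proof.
move=> cg; apply: continuous_compact_integrable; first exact: segment_compact.
exact: continuous_in_subspaceT.
Qed.

Lemma int0D {g h : R -> R} : {in `[0, t]%classic, continuous g} ->
  {in `[0, t]%classic, continuous h} ->
  int0 t (fun s => g s + h s) = int0 t g + int0 t h.
Proof. by move=> cg ch; rewrite /int0 RintegralD //; apply: int0_integrable. Qed.

Lemma int0B {g h : R -> R} : {in `[0, t]%classic, continuous g} ->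
  {in `[0, t]%classic, continuous h} ->
  int0 t (fun s => g s - h s) = int0 t g - int0 t h.
Proof. by move=> cg ch; rewrite /int0 RintegralB //; apply: int0_integrable. Qed.

Lemma int0Zl (k : R) {g : R -> R} : {in `[0, t]%classic, continuous g} ->
  int0 t (fun s => k * g s) = k * int0 t g.
Proof. by move=> cg; rewrite /int0 RintegralZl //; apply: int0_integrable. Qed.

Lemma int0_cst (c : R) : 0 <= t -> int0 t (fun=> c) = c * t.
Proof.
move=> t0; rewrite /int0 Rintegral_cst //.
suff -> : fine (lebesgue_measure (`[0, t]%classic : set R)) = t by [].
rewrite lebesgue_measure_itv /= lte_fin.
case: ltP => [_|t_le0]; first by rewrite /= subr0.
by apply/eqP; rewrite eq_le t_le0 t0.
Qed.

Lemma eq_int0 {g h : R -> R} : (forall s, 0 <= s <= t -> g s = h s) -> int0 t g = int0 t h.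
Proof. by move=> gh; apply: eq_Rintegral => s; rewrite inE /= in_itv => /gh. Qed.

Lemma le_norm_int0 {g h : R -> R} : {in `[0, t]%classic, continuous g} ->
  {in `[0, t]%classic, continuous h} ->
  (forall s, 0 <= s <= t -> `|g s| <= h s) -> `|int0 t g| <= int0 t h.
Proof.
move=> cg ch gh; rewrite /int0.
apply: (le_trans (le_normr_Rintegral _ (int0_integrable cg))) => //.
apply: le_Rintegral => //; last exact: int0_integrable.
by apply: int0_integrable => x /cg; exact: cvg_norm.
Qed.

End int0_calculus.

Lemma C2_continuous {R : realType} {f : R -> R} : C2 f ->
  [/\ continuous f, continuous (derive1 f) & continuous (derive1n 2 f)].
Proof.
move=> [df [ddf cd2f]]; split; last exact: cd2f.
- by move=> x; apply/differentiable_continuous; rewrite -derivable1_diffP.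
- by move=> x; apply/differentiable_continuous; rewrite -derivable1_diffP.
Qed.

Lemma int0_by_parts_C2 {R : realType} (f : R -> R) (t : R) : C2 f -> 0 < t ->
  int0 t (fun s => f s * derive1n 2 f s) =
  f t * derive1 f t - f 0 * derive1 f 0 - int0 t (fun s => derive1 f s ^+ 2).
Proof.
move=> Cf t0; have [cf cdf cd2f] := C2_continuous Cf; have [df [ddf _]] := Cf.
have f_LR : derivable_oo_LRcontinuous f 0 t.
  by split; [move=> x _; exact: df | exact: cvg_at_right_filter (cf 0) |
    exact: cvg_at_left_filter (cf t)].
have df_LR : derivable_oo_LRcontinuous (derive1 f) 0 t.
  by split; [move=> x _; exact: ddf | exact: cvg_at_right_filter (cdf 0) |
    exact: cvg_at_left_filter (cdf t)].
rewrite /int0 (@Rintegration_by_parts _ f (derive1 f) (derive1 f) (derive1n 2 f)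
  0 t t0 (continuous_subspaceT cdf) f_LR (fun _ _ => erefl)
  (continuous_subspaceT cd2f) df_LR (fun _ _ => erefl)).
by congr (_ - _); apply: eq_Rintegral => s _; rewrite expr2.
Qed.

Lemma continuous_max0_comp {R : realType} {h : R -> R} :
  {within `[0, +oo[, continuous h} -> continuous (fun x : R => h (Num.max x 0)).
Proof.
move=> /subspace_continuousP ch x.
have max0_ge0 (y : R) : `[0, +oo[%classic (Num.max y 0).
  by rewrite /= in_itv /= andbT le_max lexx orbT.
apply: (@cvg_comp _ _ _ (fun y : R => Num.max y 0) h _ _ _ _ (ch _ (max0_ge0 x))).
move=> A /= /(continuous_max cvg_id (cvg_cst (0 : R))) => Ax.
have {}Ax : \forall y \near x, `[0, +oo[%classic (Num.max y 0) -> A (Num.max y 0) := Ax.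
by apply: filterS Ax => y Ay; exact: Ay (max0_ge0 y).
Qed.

Lemma pos_continuous_extension {R : realType} {T : Type} (tau : label -> T -> R)
  (B : label -> T -> R -> R) (w : T) :
  (forall u, B u w 0 = 0) -> (forall u, {within `[0, +oo[, continuous (B u w)}) ->
  forall u, exists2 g : R -> R, continuous g & forall s, 0 <= s -> g s = pos tau B w u s.
Proof.
move=> B0 cB; elim=> [|b v [gv cgv gvE]].
  exists (fun x => B [::] w (Num.max x 0)); first exact: continuous_max0_comp.
  by move=> s s0; rewrite max_l.
set bb := birth tau w (b :: v).
(* Birth times may be negative (tau is not assumed nonnegative pathwise), so
   the parent is frozen at its value pos v bb rather than at gv bb. *)
exists (fun x => gv (Num.min x bb) + (pos tau B w v bb - gv bb)
                 + B (b :: v) w (Num.max (x - bb) 0)).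
  move=> x; apply: cvgD; first apply: cvgD.
  - exact: (continuous_comp (f := fun y => Num.min y bb)
      (continuous_min cvg_id (cvg_cst bb)) (cgv _)).
  - exact: cvg_cst.
  - exact: (continuous_comp (f := fun y => y - bb) (cvgB cvg_id (cvg_cst bb))
      (continuous_max0_comp (cB _) _)).
move=> s s0 /=; rewrite -/bb; case: ltP => sb.
- rewrite max_r ?subr_le0 ?ltW // B0 addr0 (gvE bb) ?subrr ?addr0 ?gvE //.
  exact/ltW/(le_lt_trans s0 sb).
- by rewrite max_l ?subr_ge0 // -/bb; ring.
Qed.

Lemma norm_tube_linear_le {R : realType} (a : R) {l y : R} : `|y| < l ->
  `|a * y| <= `|a| * l.
Proof. by move=> yl; rewrite normrM ler_wpM2l // ltW. Qed.

Lemma norm_tube_quadratic_le {R : realType} (a : R) {l y : R} : 0 < l -> `|y| < l ->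
  `|a / (2 * l) * y ^+ 2| <= 2^-1 * (`|a| * l).
Proof.
move=> l0 yl; have y2 : `|y| ^+ 2 <= l ^+ 2 by have := normr_ge0 y; nra.
rewrite normrM normrX normrM normfV (gtr0_norm (_ : 0 < 2 * l)) ?mulr_gt0 //.
apply: (le_trans (ler_wpM2l _ y2)); first by rewrite mulr_ge0 // invr_ge0 mulr_ge0 // ltW.
suff -> : `|a| / (2 * l) * l ^+ 2 = 2^-1 * (`|a| * l) by [].
by field; rewrite gt_eqF.
Qed.

Definition log_Gu {R : realType} (f L X : R -> R) (t : R) : R :=
  derive1 f t * X t - derive1 f 0 * X 0 - int0 t (fun s => X s * derive1n 2 f s)
  - 2^-1 * int0 t (fun s => derive1 f s ^+ 2)
  + int0 t (fun s => pi ^+ 2 / (8 * L s ^+ 2))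
  + derive1 L t / (2 * L t) * (X t - f t) ^+ 2
  - int0 t (fun s => derive1n 2 L s / (2 * L s) * (X s - f s) ^+ 2
                     + derive1 L s / (2 * L s)).

Lemma GuE {R : realType} {T : Type} (tau : label -> T -> R) (B : label -> T -> R -> R)
  (f L : R -> R) (t : R) (w : T) (u : label) :
  Gu tau B f L t w u = expR (log_Gu f L (pos tau B w u) t).
Proof. by []. Qed.

Lemma eq_log_Gu {R : realType} (f L X X' : R -> R) (t : R) : 0 <= t ->
  (forall s, 0 <= s <= t -> X s = X' s) -> log_Gu f L X t = log_Gu f L X' t.
Proof.
move=> t0 XX'; rewrite /log_Gu !XX' ?lexx ?t0 //.
congr (_ - _ - _ - _ + _ + _ - _); apply: eq_int0 => s /XX' -> //.
Qed.

Section path_in_tube.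
Context {R : realType} (r : R) {f L X : R -> R} {t : R}.
Hypotheses (Cf : C2 f) (CL : C2 L) (L_gt0 : forall s, 0 <= s -> 0 < L s)
  (cX : continuous X) (t_gt0 : 0 < t)
  (tube : forall s, 0 <= s <= t -> `|X s - f s| < L s).

Let cf : continuous f. Proof. by case: (C2_continuous Cf). Qed.
Let cdf : continuous (derive1 f). Proof. by case: (C2_continuous Cf). Qed.
Let cd2f : continuous (derive1n 2 f). Proof. by case: (C2_continuous Cf). Qed.
Let cL : continuous L. Proof. by case: (C2_continuous CL). Qed.
Let cdL : continuous (derive1 L). Proof. by case: (C2_continuous CL). Qed.
Let cd2L : continuous (derive1n 2 L). Proof. by case: (C2_continuous CL). Qed.

Let L_segment_neq0 x : x \in `[0, t]%classic -> L x != 0.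
Proof. by rewrite inE /= in_itv => /andP[x0 _]; rewrite gt_eqF ?L_gt0. Qed.

Let cinv2L x : x \in `[0, t]%classic -> {for x, continuous (fun s => (2 * L s)^-1)}.
Proof.
move=> /L_segment_neq0 Lx; apply: cvgV; first by rewrite mulf_neq0.
exact: cvgM (cvg_cst _) (cL x).
Qed.

Let cinv8L2 x : x \in `[0, t]%classic ->
  {for x, continuous (fun s => (8 * L s ^+ 2)^-1)}.
Proof.
move=> /L_segment_neq0 Lx; apply: cvgV; first by rewrite mulf_neq0 ?expf_neq0.
exact: cvgM (cvg_cst _) (cvgM (cL x) (cL x)).
Qed.

Let cY x : {for x, continuous (fun s => X s - f s)}.
Proof. exact: cvgB (cX x) (cf x). Qed.

Let c_Yd2f : {in `[0, t]%classic, continuous (fun s => (X s - f s) * derive1n 2 f s)}.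
Proof. by move=> x _; exact: cvgM (cY x) (cd2f x). Qed.

Lemma stoch_int_decomp :
  derive1 f t * X t - derive1 f 0 * X 0 - int0 t (fun s => X s * derive1n 2 f s) =
  int0 t (fun s => derive1 f s ^+ 2)
  + (derive1 f t * (X t - f t) - derive1 f 0 * (X 0 - f 0)
     - int0 t (fun s => (X s - f s) * derive1n 2 f s)).
Proof.
have -> : (fun s => X s * derive1n 2 f s) =
    (fun s => f s * derive1n 2 f s + (X s - f s) * derive1n 2 f s).
  by apply/funext => s; ring.
have c_fd2f : {in `[0, t]%classic, continuous (fun s => f s * derive1n 2 f s)}.
  by move=> x _; exact: cvgM (cf x) (cd2f x).
rewrite (int0D c_fd2f c_Yd2f) int0_by_parts_C2 //; ring.
Qed.

Let c_df2 : {in `[0, t]%classic, continuous (fun s => derive1 f s ^+ 2)}.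
Proof. by move=> x _; exact: cvgM (cdf x) (cdf x). Qed.

Let c_pi : {in `[0, t]%classic, continuous (fun s => pi ^+ 2 / (8 * L s ^+ 2))}.
Proof. by move=> x /cinv8L2; exact: cvgM (cvg_cst _). Qed.

Let c_dL : {in `[0, t]%classic, continuous (fun s => derive1 L s / (2 * L s))}.
Proof. by move=> x /cinv2L; exact: cvgM (cdL x). Qed.

Let c_d2L_Y2 : {in `[0, t]%classic,
  continuous (fun s => derive1n 2 L s / (2 * L s) * (X s - f s) ^+ 2)}.
Proof. by move=> x /cinv2L c; exact: cvgM (cvgM (cd2L x) c) (cvgM (cY x) (cY x)). Qed.

Let c_d2f_L : {in `[0, t]%classic, continuous (fun s => `|derive1n 2 f s| * L s)}.
Proof. by move=> x _; exact: cvgM (cvg_norm (cd2f x)) (cL x). Qed.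

Let c_d2L_L : {in `[0, t]%classic, continuous (fun s => `|derive1n 2 L s| * L s)}.
Proof. by move=> x _; exact: cvgM (cvg_norm (cd2L x)) (cL x). Qed.

Lemma Iint_decomp : Iint r f L t =
  r * t - 2^-1 * int0 t (fun s => derive1 f s ^+ 2)
  - int0 t (fun s => pi ^+ 2 / (8 * L s ^+ 2)) + int0 t (fun s => derive1 L s / (2 * L s)).
Proof.
have c_half : {in `[0, t]%classic, continuous (fun s => 2^-1 * derive1 f s ^+ 2)}.
  by move=> x /c_df2; exact: cvgM (cvg_cst _).
have c_r_half : {in `[0, t]%classic,
    continuous (fun s => r - 2^-1 * derive1 f s ^+ 2)}.
  by move=> x /c_half; exact: cvgB (cvg_cst _).
have c_r_half_pi : {in `[0, t]%classic,
    continuous (fun s => r - 2^-1 * derive1 f s ^+ 2 - pi ^+ 2 / (8 * L s ^+ 2))}.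
  by move=> x xt; exact: cvgB (c_r_half x xt) (c_pi x xt).
rewrite /Iint /integrand (int0D c_r_half_pi c_dL) (int0B c_r_half c_pi).
by rewrite (int0B (fun x _ => cvg_cst r) c_half) (int0Zl _ c_df2) int0_cst // ltW.
Qed.

Let tube0 : `|X 0 - f 0| < L 0.
Proof. by apply: tube; rewrite lexx ltW. Qed.

Let tubet : `|X t - f t| < L t.
Proof. by apply: tube; rewrite lexx ltW. Qed.

Lemma f_drift_le :
  derive1 f t * (X t - f t) - derive1 f 0 * (X 0 - f 0)
  - int0 t (fun s => (X s - f s) * derive1n 2 f s)
  <= `|derive1 f t| * L t + `|derive1 f 0| * L 0
     + int0 t (fun s => `|derive1n 2 f s| * L s).
Proof.
have bt := norm_tube_linear_le (derive1 f t) tubet.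
have b0 := norm_tube_linear_le (derive1 f 0) tube0.
have bint : `|int0 t (fun s => (X s - f s) * derive1n 2 f s)|
    <= int0 t (fun s => `|derive1n 2 f s| * L s).
  apply: le_norm_int0 c_Yd2f c_d2f_L _ => s /tube.
  by rewrite mulrC; exact: norm_tube_linear_le.
have := ler_normlW bt; have := lerNnormlW b0; have := lerNnormlW bint; lra.
Qed.

Lemma L_drift_le :
  derive1 L t / (2 * L t) * (X t - f t) ^+ 2
  - int0 t (fun s => derive1n 2 L s / (2 * L s) * (X s - f s) ^+ 2)
  <= 2^-1 * `|derive1 L t| * L t + 2^-1 * int0 t (fun s => `|derive1n 2 L s| * L s).
Proof.
have bt := norm_tube_quadratic_le (derive1 L t) (L_gt0 _ (ltW t_gt0)) tubet.
have bint : `|int0 t (fun s => derive1n 2 L s / (2 * L s) * (X s - f s) ^+ 2)|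
    <= 2^-1 * int0 t (fun s => `|derive1n 2 L s| * L s).
  rewrite -(int0Zl _ c_d2L_L); apply: le_norm_int0 c_d2L_Y2 _ _.
    by move=> x /c_d2L_L; exact: cvgM (cvg_cst _).
  by move=> s /[dup] /andP[s0 _] /tube; exact: norm_tube_quadratic_le _ (L_gt0 _ s0).
have := ler_normlW bt; have := lerNnormlW bint; lra.
Qed.

Lemma log_Gu_tube_le :
  log_Gu f L X t - r * t <= - Iint r f L t + Efl f L t + `|derive1 f 0| * L 0.
Proof.
rewrite /log_Gu stoch_int_decomp Iint_decomp /Efl (int0D c_d2L_Y2 c_dL).
move: f_drift_le L_drift_le.
(* Abstracting the derivatives keeps lra from unfolding [derive] when it
   compares atoms. *)
generalize (derive1 f) (derive1n 2 f) (derive1 L) (derive1n 2 L) => *; lra.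
Qed.

End path_in_tube.

Lemma le_esum_cst {R : realType} {T : choiceType} (S : set T) (c : R) : 0 <= c ->
  (\esum_(i in S) c%:E <= c%:E * \esum_(i in S) 1)%E.
Proof.
move=> c0; apply: ge_ereal_sup => _ [A [finA AS] <-].
rewrite (eq_fsbigr (fun _ => c%:E * 1)%E); last by move=> i _; rewrite mule1.
rewrite -ge0_mule_fsumr // lee_wpmul2l ?lee_fin //.
by apply: ereal_sup_ubound; exists A.
Qed.

Section Zmart_bound.
Context {R : realType} {T : Type} {tau : label -> T -> R} {B : label -> T -> R -> R}
  (r : R) {f L : R -> R} {w : T} {t : R}.
Hypotheses (Cf : C2 f) (CL : C2 L) (L_gt0 : forall s, 0 <= s -> 0 < L s)
  (t_gt0 : 0 < t)
  (pos_ext : forall u, exists2 g : R -> R,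
     continuous g & forall s, 0 <= s -> g s = pos tau B w u s).

Let K := expR (- Iint r f L t + Efl f L t + `|derive1 f 0| * L 0).

Lemma zeta_tube_le u : in_tube tau B f L t w u ->
  expR (- r * t) * zeta tau B f L t w u <= K.
Proof.
move=> tb; have [g cg gE] := pos_ext u.
have g_tube s : 0 <= s <= t -> `|g s - f s| < L s.
  by move=> /[dup] /andP[s0 _] /tb; rewrite gE.
rewrite /zeta indicE mem_set // mulr1 GuE
  (@eq_log_Gu _ _ _ _ g _ (ltW t_gt0)); last by move=> s /andP[s0 _]; rewrite gE.
apply: (@le_trans _ _ (expR (- r * t) * expR (log_Gu f L g t))).
  by rewrite ler_wpM2l ?expR_ge0 // -[leRHS]mulr1 ler_wpM2l ?expR_ge0 ?cos_le1.
rewrite -expRD ler_expR mulNr addrC.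
by have := log_Gu_tube_le r Cf CL L_gt0 cg t_gt0 g_tube.
Qed.

Lemma Zmart_le_card_Nhat :
  (Zmart tau B r f L t w <= K%:E * card_Nhat tau B f L t w)%E.
Proof.
apply: (@le_trans _ _ (\esum_(u in alive tau t w)
    (if u \in [set v | in_tube tau B f L t w v] then K%:E else 0))%E).
  apply: le_esum => u _; case: ifPn => [/set_mem /zeta_tube_le|tb].
    by rewrite lee_fin.
  by rewrite /zeta indicE (negbTE tb) !mulr0.
by rewrite -esum_mkcondr; apply: le_esum_cst; rewrite expR_ge0.
Qed.

End Zmart_bound.

Section liminf_oo_theory.
Context {R : realType}.

Lemma le_liminf_oo_near (g : R -> \bar R) (y : \bar R) :
  (\forall t \near +oo, (y <= g t)%E) -> (y <= liminf_oo g)%E.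
Proof.
move=> [M [_ yg]]; apply: le_trans (ereal_sup_ubound _); last by exists (M + 1).
apply/ereal_infP => _ [t + <-]; rewrite /= in_itv /= andbT => Mt.
by apply: yg; rewrite (lt_le_trans _ Mt) // ltrDl.
Qed.

Lemma liminf_oo_gt_real {g : R -> \bar R} {x : R} : (x%:E < liminf_oo g)%E ->
  exists2 y : R, x < y & \forall t \near +oo, (y%:E <= g t)%E.
Proof.
move=> /ereal_sup_gt [_ [T _ <-]]; set z := ereal_inf _ => xz.
have zg : \forall t \near +oo, (z <= g t)%E.
  near=> t; apply: ereal_inf_lbound; exists t => //=.
  by rewrite in_itv /= andbT; near: t; apply: nbhs_pinfty_ge; exact: num_real.
case: z xz zg => [y| |] // xy zg; first by exists y.
by exists (x + 1); [rewrite ltrDl | apply: filterS zg => t; exact: le_trans (leey _)].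
Unshelve. all: by end_near.
Qed.

End liminf_oo_theory.

Lemma lnE_ratio_ge {R : realType} (I D c e : R) (n : \bar R) : 0 < I -> 0 < c ->
  (c%:E <= (expR (- I + D))%:E * n)%E -> D - ln c <= e * I ->
  ((1 - e)%:E <= lnE n * (I^-1)%:E)%E.
Proof.
move=> I0 c0 + DI; case: n => [n | | ] cn.
- have n0 : 0 < n.
    by rewrite -(pmulr_rgt0 _ (expR_gt0 (- I + D))); apply: lt_le_trans c0 _.
  have : ln c <= - I + D + ln n.
    by rewrite -[- I + D]expRK -lnM ?posrE ?expR_gt0 // ler_ln ?posrE ?mulr_gt0 ?expR_gt0.
  rewrite /lnE /= (leNgt n) n0 /= -EFinM lee_fin ler_pdivlMr //; lra.
- by rewrite /= gt0_mulye ?leey // lte_fin invr_gt0.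
- by move: cn; rewrite gt0_muleNy ?lte_fin ?expR_gt0 // leeNy_eq.
Qed.

Lemma pathwise_growth {R : realType} {T : Type} (tau : label -> T -> R)
  (B : label -> T -> R -> R) (r : R) (f L : R -> R) (w : T) :
  C2 f -> C2 L -> (forall s, 0 <= s -> 0 < L s) ->
  (fun t => Efl f L t / t) @ +oo --> 0 -> (0 < Sfl r f L)%E ->
  (forall u, exists2 g : R -> R,
     continuous g & forall s, 0 <= s -> g s = pos tau B w u s) ->
  (0 < liminf_oo (fun t => Zmart tau B r f L t w))%E ->
  (1 <= liminf_oo (fun t => lnE (card_Nhat tau B f L t w) * ((Iint r f L t)^-1)%:E))%E.
Proof.
move=> Cf CL L_gt0 /cvgr0Pnorm_lt Efl_o S_gt0 pos_ext Z_gt0.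
have [c c_gt0 Zc] := liminf_oo_gt_real Z_gt0.
have [s s_gt0 Is] := liminf_oo_gt_real S_gt0.
apply/lee_subgt0Pr => e e_gt0; rewrite -EFinB; apply: le_liminf_oo_near.
have es_gt0 : 0 < e / 2 * s by rewrite !mulr_gt0.
near=> t.
have t_gt0 : 0 < t by near: t; exact: nbhs_pinfty_gt.
have sI : s * t <= Iint r f L t.
  by rewrite -ler_pdivlMr // -lee_fin; near: t.
have EflE : Efl f L t <= e / 2 * s * t.
  by rewrite -ler_pdivrMr //; apply/ltW/ltr_normlW; near: t; exact: Efl_o.
have ct : `|derive1 f 0| * L 0 - ln c <= e / 2 * s * t.
  by rewrite -ler_pdivrMl //; near: t; apply: nbhs_pinfty_ge; exact: num_real.
have Zct : (c%:E <= Zmart tau B r f L t w)%E by near: t.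
apply: (@lnE_ratio_ge _ (Iint r f L t) (Efl f L t + `|derive1 f 0| * L 0) c).
- exact: lt_le_trans (mulr_gt0 s_gt0 t_gt0) sI.
- exact: c_gt0.
- by rewrite addrA; exact: le_trans Zct (Zmart_le_card_Nhat r Cf CL L_gt0 t_gt0 pos_ext).
- move: EflE ct (ler_wpM2l (ltW e_gt0) sI).
  generalize (Efl f L t) (Iint r f L t) (`|derive1 f 0| * L 0) => *; lra.
Unshelve. all: by end_near.
Qed.

Theorem proposition2 (R : realType) (d : measure_display) (Omega : measurableType d)
  (P : probability Omega R) (r : R)
  (tau : label -> Omega -> R) (B : label -> Omega -> R -> R)
  (f L : R -> R) :
  0 < r ->
  (forall u, is_exponential P r (tau u)) ->
  (forall u, is_brownian P (B u)) ->
  mutually_independent P (fun k : label + label =>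
    match k with
    | inl u => sigmaRV [set: unit] (fun _ => tau u)
    | inr u => sigmaRV `[0, +oo[%classic (fun t w => B u w t)
    end) ->
  (forall s, 0 <= s -> 0 < L s) ->
  usual_conditions r f L ->
  (0 < Sfl r f L)%E ->
  {ae P, forall w,
     (0 < liminf_oo (fun t => Zmart tau B r f L t w))%E ->
     (1 <= liminf_oo (fun t =>
        lnE (card_Nhat tau B f L t w) * ((Iint r f L t)^-1)%:E))%E}.
Proof.
move=> _ _ B_bm _ L_gt0 [_ [Cf CL] Efl_o _] S_gt0.
apply: aeW => w; apply: pathwise_growth => //.
by apply: pos_continuous_extension => u; case: (B_bm u).
Qed.
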